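(* Let $a$ and $c$ be coprime positive odd integers. Then for every integer $p\geq1$ and all $x,z\in\mathbb{R}$, $$ac^{p}S^{(5)}_{p}(a,c:x,z)+ca^{p}S^{(5)}_{p}(c,a:z,x)=-\frac{1}{2}\sum_{j=1}^{p}\binom{p-1}{j-1}a^{p+1-j}c^{j}\mathcal{E}_{p-j}(z)\mathcal{E}_{j-1}(x)+\mathcal{E}_{p}(az+cx).$$
   Context: $B_n(x)$ is the $n$th Bernoulli polynomial ($\frac{te^{xt}}{e^t-1}=\sum B_n(x)\frac{t^n}{n!}$) and $\mathcal{B}_n(x)=B_n(x-[x])$ the $n$th Bernoulli function ($[x]$ the largest integer $\le x$). $E_n(x)$ is the $n$th Euler polynomial ($\frac{2e^{xt}}{e^t+1}=\sum E_n(x)\frac{t^n}{n!}$), and the Euler function $\mathcal{E}_n$ ($n\ge0$) is defined by $\mathcal{E}_n(x)=E_n(x)$ for $0\le x<1$ and $\mathcal{E}_n(x+m)=(-1)^m\mathcal{E}_n(x)$ for $m\in\mathbb{Z}$. For positive integers $a,c$, an integer $p\ge1$ and real $x,z$, define $$S^{(5)}_{p}(a,c:x,z)=\sum_{\mu=0}^{c-1}(-1)^{\mu}\mathcal{E}_{p-1}\Big(a\frac{\mu+z}{c}+x\Big)\mathcal{B}_{1}\Big(\frac{\mu+z}{c}\Big).$$ *)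

From mathcomp Require Import all_boot all_order all_algebra.
From mathcomp Require Import reals.
Set Implicit Arguments. Unset Strict Implicit. Unset Printing Implicit Defensive.
Import Order.TTheory GRing.Theory Num.Theory.
Local Open Scope ring_scope.

Section Defs.
Variable R : realType.

(* Euler polynomials, from  2 e^{xt} = (e^t + 1) sum_n E_n(x) t^n/n!  by
   comparing the coefficients of t^n/n!:
     2 x^n = sum_{k=0}^{n} C(n,k) E_k(x) + E_n(x),
   i.e.  E_n(x) = x^n - 1/2 sum_{k<n} C(n,k) E_k(x).
   eulerL n x = [:: E_0(x); ...; E_n(x)]. *)
Fixpoint eulerL (n : nat) (x : R) : seq R :=
  match n with
  | 0 => [:: 1]
  | m.+1 => let s := eulerL m x in
      rcons s (x ^+ m.+1 - 2^-1 * \sum_(k < m.+1) ('C(m.+1, k))%:R * nth 0 s k)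
  end.
Definition eulerP (n : nat) (x : R) : R := nth 0 (eulerL n x) n.

(* Bernoulli polynomials, from  t e^{xt} = (e^t - 1) sum_n B_n(x) t^n/n!  by
   comparing the coefficients of t^{n+1}/(n+1)!:
     (n+1) x^n = sum_{k=0}^{n} C(n+1,k) B_k(x),
   i.e.  B_n(x) = x^n - 1/(n+1) sum_{k<n} C(n+1,k) B_k(x). *)
Fixpoint bernL (n : nat) (x : R) : seq R :=
  match n with
  | 0 => [:: 1]
  | m.+1 => let s := bernL m x in
      rcons s (x ^+ m.+1 - (m.+2%:R)^-1 *
                 \sum_(k < m.+1) ('C(m.+2, k))%:R * nth 0 s k)
  end.
Definition bernP (n : nat) (x : R) : R := nth 0 (bernL n x) n.

Definition fracR (x : R) : R := x - (Num.floor x)%:~R.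

Definition bernF (n : nat) (x : R) : R := bernP n (fracR x).

(* Euler function: \mathcal{E}_n(x) = E_n(x) on [0,1), \mathcal{E}_n(x+m) = (-1)^m \mathcal{E}_n(x);
   equivalently \mathcal{E}_n(x) = (-1)^[x] E_n(x - [x]). *)
Definition eulerF (n : nat) (x : R) : R :=
  (-1) ^ (Num.floor x) * eulerP n (fracR x).

Definition S5 (p a c : nat) (x z : R) : R :=
  \sum_(mu < c) (-1) ^+ mu * eulerF p.-1 (a%:R * ((mu%:R + z) / c%:R) + x)
                 * bernF 1 ((mu%:R + z) / c%:R).

End Defs.

From mathcomp Require Import all_boot all_order all_algebra.
From mathcomp Require Import reals ring lra.
Set Implicit Arguments.
Unset Strict Implicit.
Unset Printing Implicit Defensive.
Import Order.TTheory GRing.Theory Num.Theory.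
Local Open Scope ring_scope.

(* Replacing x by x + 1 or z by z + 1 changes the sign of both sides (a and c
   are odd), so it suffices to take x, z in [0, 1).  There the multiplication
   formula E_n(u) = m^n sum_(k < m) (-1)^k E_n((k + u)/m) for odd m, together
   with the reindexing mu |-> a mu mod c that coprimality allows, writes every
   term as (ac)^p times an alternating double sum, over mu < c and nu < a, of a
   function of y = (mu + z)/c and v = (nu + x)/a.  Termwise the identity is then
   the convolution formula
     sum_k C(n,k) E_(n-k)(y) E_k(v) = 2 (1 - y - v) E_n(y + v) + 2 E_(n+1)(y + v),
   corrected by the sign jump of the Euler function at y + v = 1.  The
   polynomial identities all follow from the fact that a polynomial P with
   P(u + 1) = - P(u) is zero. *)

Section AntiperiodicFunctions.
Variable R : pzRingType.
Implicit Types (f : R -> R) (u : R).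

Definition antiperiodic f := forall u, f (u + 1) = - f u.

Lemma antiperiodic_addn f u k : antiperiodic f -> f (u + k%:R) = (-1) ^+ k * f u.
Proof.
move=> fA; elim: k => [|k IHk]; first by rewrite mulr0n addr0 mul1r.
by rewrite -natr1 addrA fA IHk exprS mulN1r mulNr.
Qed.

Lemma sum_alt_shift_odd m (F : nat -> R) : odd m ->
  \sum_(k < m) (-1) ^+ k * F k.+1 + \sum_(k < m) (-1) ^+ k * F k = F m + F 0%N.
Proof.
move=> m_odd.
have shifted : \sum_(k < m.+1) (-1) ^+ k * F k
    = F 0%N - \sum_(k < m) (-1) ^+ k * F k.+1.
  rewrite big_ord_recl /= expr0 mul1r -sumrN; congr (_ + _).
  by apply: eq_bigr => k _; rewrite exprS mulN1r mulNr.
move: shifted; rewrite big_ord_recr /= -signr_odd m_odd expr1 mulN1r.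
by move=> /(canRL (subrK _)) ->; rewrite addrCA addrA subrK addrC.
Qed.

End AntiperiodicFunctions.

Section PolynomialFunctions.
Variable R : comNzRingType.
Implicit Types (f g : R -> R).

Definition polyfun f := exists p : {poly R}, forall u, f u = p.[u].

Lemma eq_polyfun f g : (forall u, f u = g u) -> polyfun g -> polyfun f.
Proof. by move=> fg [p gp]; exists p => u; rewrite fg gp. Qed.

Lemma polyfunC k : polyfun (fun=> k).
Proof. by exists k%:P => u; rewrite hornerC. Qed.

Lemma polyfunX : polyfun (fun u => u).
Proof. by exists 'X => u; rewrite hornerX. Qed.

Lemma polyfunD f g : polyfun f -> polyfun g -> polyfun (fun u => f u + g u).
Proof. by move=> [p fp] [q gq]; exists (p + q) => u; rewrite hornerD fp gq. Qed.

Lemma polyfunN f : polyfun f -> polyfun (fun u => - f u).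
Proof. by move=> [p fp]; exists (- p) => u; rewrite hornerN fp. Qed.

Lemma polyfunM f g : polyfun f -> polyfun g -> polyfun (fun u => f u * g u).
Proof. by move=> [p fp] [q gq]; exists (p * q) => u; rewrite hornerM fp gq. Qed.

Lemma polyfunXn f n : polyfun f -> polyfun (fun u => f u ^+ n).
Proof. by move=> [p fp]; exists (p ^+ n) => u; rewrite horner_exp fp. Qed.

Lemma polyfun_comp f g : polyfun f -> polyfun g -> polyfun (fun u => f (g u)).
Proof.
by move=> [p fp] [q gq]; exists (p \Po q) => u; rewrite horner_comp fp gq.
Qed.

Lemma polyfun_sum n (F : 'I_n -> R -> R) :
  (forall i, polyfun (F i)) -> polyfun (fun u => \sum_(i < n) F i u).
Proof.
move=> /fin_all_exists [p Fp]; exists (\sum_i p i) => u.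
by rewrite horner_sum; apply: eq_bigr => i _; apply: Fp.
Qed.

End PolynomialFunctions.

Section AntiperiodicPolynomials.
Variable R : numDomainType.

Lemma antiperiodic_poly_eq0 (p : {poly R}) : antiperiodic (horner p) -> p = 0.
Proof.
move=> pA.
have p_even k : p.[(2 * k)%:R] = p.[0].
  elim: k => [|k IHk]; first by rewrite muln0.
  by rewrite mulnS natrD addrC (antiperiodic_addn _ 2 pA) sqrrN expr1n mul1r.
(* p is 2-periodic, so p - p(0) vanishes at all even integers. *)
have p_const : p = p.[0]%:P.
  apply/eqP; rewrite -subr_eq0; apply/eqP.
  pose evens := [seq (2 * k)%:R : R | k <- iota 0 (size (p - p.[0]%:P))].
  apply: (@roots_geq_poly_eq0 _ _ evens); last by rewrite size_map size_iota.
    by apply/allP => _ /mapP [k _ ->]; rewrite rootE hornerD hornerN hornerC p_even subrr.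
  rewrite map_inj_uniq ?iota_uniq // => i j /eqP; rewrite eqr_nat eqn_pmul2l //.
  by move/eqP.
have := pA 0; rewrite p_const !hornerC => /eqP; rewrite eq_sym eqNr => /eqP p0.
by move: p_const; rewrite p0 polyC0.
Qed.

Lemma eq_polyfun_antiperiodic (f g : R -> R) : polyfun f -> polyfun g ->
  (forall u, f (u + 1) + f u = g (u + 1) + g u) -> forall u, f u = g u.
Proof.
move=> [p fp] [q gq] fg u.
suff /eqP : p - q = 0 by rewrite subr_eq0 fp gq => /eqP ->.
apply: antiperiodic_poly_eq0 => v; rewrite !hornerD !hornerN -!fp -!gq.
by apply/eqP; rewrite -subr_eq0 opprK addrACA -opprD fg subrr.
Qed.

End AntiperiodicPolynomials.

Section AlternatingSums.
Variable R : numFieldType.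
Implicit Types (f g : R -> R) (u y : R).

Definition alt_sum m f u := \sum_(k < m) (-1) ^+ k * f ((k%:R + u) / m%:R).

Lemma addn_div_itv m k u : (k < m)%N -> 0 <= u < 1 -> 0 <= (k%:R + u) / m%:R < 1.
Proof.
move=> km /andP [u_ge0 u_lt1].
have m_gt0 : (0 : R) < m%:R by rewrite ltr0n (leq_ltn_trans _ km).
apply/andP; split; first by rewrite divr_ge0 ?addr_ge0 ?ler0n.
rewrite ltr_pdivrMr // mul1r.
by apply: (@lt_le_trans _ _ k.+1%:R); rewrite ?ler_nat // -natr1 ltrD2l.
Qed.

Lemma eq_alt_sum m f g u : (forall t, f t = g t) -> alt_sum m f u = alt_sum m g u.
Proof. by move=> fg; apply: eq_bigr => k _; rewrite fg. Qed.

Lemma eq_alt_sum_itv m f g u : 0 <= u < 1 -> (forall t, 0 <= t < 1 -> f t = g t) ->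
  alt_sum m f u = alt_sum m g u.
Proof. by move=> u01 fg; apply: eq_bigr => k _; rewrite fg ?addn_div_itv. Qed.

Lemma polyfun_alt_sum m f : polyfun f -> polyfun (alt_sum m f).
Proof.
move=> f_poly; apply: polyfun_sum => k; apply: polyfunM; first exact: polyfunC.
apply: polyfun_comp f_poly _; apply: polyfunM; last exact: polyfunC.
by apply: polyfunD; [exact: polyfunC | exact: polyfunX].
Qed.

Lemma alt_sumD m f g u :
  alt_sum m (fun t => f t + g t) u = alt_sum m f u + alt_sum m g u.
Proof. by rewrite -big_split; apply: eq_bigr => k _; rewrite mulrDr. Qed.

Lemma alt_sumMl m k f u : alt_sum m (fun t => k * f t) u = k * alt_sum m f u.
Proof. by rewrite mulr_sumr; apply: eq_bigr => i _; rewrite mulrCA. Qed.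

Lemma alt_sum_sum m N (F : 'I_N -> R -> R) u :
  alt_sum m (fun t => \sum_i F i t) u = \sum_i alt_sum m (F i) u.
Proof.
by rewrite /alt_sum [RHS]exchange_big; apply: eq_bigr => k _; rewrite mulr_sumr.
Qed.

Lemma alt_sum_exchange a c (F : R -> R -> R) x z :
  alt_sum a (fun v => alt_sum c (F^~ v) z) x = alt_sum c (fun y => alt_sum a (F y) x) z.
Proof.
rewrite /alt_sum; under eq_bigr do rewrite mulr_sumr.
rewrite exchange_big; apply: eq_bigr => i _; rewrite mulr_sumr.
by apply: eq_bigr => j _; rewrite mulrCA.
Qed.

Lemma alt_sum_shift m f y u : (0 < m)%N ->
  alt_sum m f (m%:R * y + u) = alt_sum m (fun v => f (y + v)) u.
Proof.
move=> m_gt0; have m_neq0 : m%:R != 0 :> R by rewrite pnatr_eq0 -lt0n.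
apply: eq_bigr => k _; congr (_ * f _).
by rewrite addrCA mulrDl mulrC mulKf.
Qed.

Lemma alt_sumD1 m f u : odd m ->
  alt_sum m f (u + 1) + alt_sum m f u = f (u / m%:R + 1) + f (u / m%:R).
Proof.
move=> m_odd; have m_neq0 : m%:R != 0 :> R by rewrite pnatr_eq0 -lt0n odd_gt0.
pose G j := f ((j%:R + u) / m%:R).
transitivity (\sum_(k < m) (-1) ^+ k * G k.+1 + \sum_(k < m) (-1) ^+ k * G k).
  by congr (_ + _); apply: eq_bigr => k _; rewrite /G -natr1 addrA addrAC.
rewrite sum_alt_shift_odd // /G; congr (f _ + f _); last by rewrite mulr0n add0r.
by rewrite mulrDl divff // addrC.
Qed.

Lemma antiperiodic_alt_sum m f : odd m -> antiperiodic f -> antiperiodic (alt_sum m f).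
Proof. by move=> m_odd fA u; apply/eqP; rewrite -addr_eq0 alt_sumD1 // fA addNr. Qed.

Lemma alt_sum_coprime a c f u : odd a -> odd c -> coprime a c -> antiperiodic f ->
  \sum_(mu < c) (-1) ^+ mu * f ((a%:R * mu%:R + u) / c%:R) = alt_sum c f u.
Proof.
move=> a_odd c_odd co_ac fA; have c_gt0 := odd_gt0 c_odd.
have c_neq0 : c%:R != 0 :> R by rewrite pnatr_eq0 -lt0n.
(* mu |-> a mu mod c permutes 'I_c; writing a mu = q c + r, the sign (-1)^q
   produced by antiperiodicity combines with (-1)^mu into (-1)^r, as a and c
   are odd. *)
pose amod (i : 'I_c) : 'I_c := Ordinal (ltn_pmod (a * i) c_gt0).
have amod_inj : injective amod.
  have le_inj (i j : 'I_c) : (i <= j)%N -> amod i = amod j -> i = j.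
    move=> ij /(congr1 val) /= /eqP; rewrite eq_sym eqn_mod_dvd; last first.
      by rewrite leq_mul2l ij orbT.
    rewrite -mulnBr Gauss_dvdr; last by rewrite coprime_sym.
    rewrite /dvdn modn_small => [ji|]; last first.
      exact: leq_ltn_trans (leq_subr i j) (ltn_ord j).
    by apply/val_inj/eqP; rewrite eqn_leq ij -subn_eq0.
  move=> i j e; case/orP: (leq_total i j) => [ij|ji]; first exact: le_inj.
  exact/esym/le_inj/esym.
rewrite /alt_sum [RHS](reindex_inj amod_inj); apply: eq_bigr => mu _ /=.
set q := (a * mu %/ c)%N; set r := (a * mu %% c)%N.
have a_mu : (a * mu = q * c + r)%N := divn_eq _ _.
have mu_parity : odd mu = odd q (+) odd r.
  by move: (congr1 odd a_mu); rewrite oddD !oddM a_odd c_odd andbT.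
have -> : (a%:R * mu%:R + u) / c%:R = (r%:R + u) / c%:R + q%:R.
  by rewrite -natrM a_mu natrD natrM -addrA mulrDl mulfK // [LHS]addrC.
rewrite antiperiodic_addn // mulrA -exprD -signr_odd -[in RHS]signr_odd.
by rewrite oddD mu_parity addbC addKb.
Qed.

End AlternatingSums.

Section EulerPolynomials.
Variable R : realType.
Implicit Types (u v y : R).

Lemma size_eulerL n u : size (eulerL n u) = n.+1.
Proof. by elim: n => //= n IHn; rewrite size_rcons IHn. Qed.

Lemma nth_eulerL n u k : (k <= n)%N -> nth 0 (eulerL n u) k = eulerP k u.
Proof.
elim: n => [|n IHn]; first by rewrite leqn0 => /eqP ->.
rewrite leq_eqVlt => /predU1P [-> //|]; rewrite ltnS => kn.
by rewrite /= nth_rcons size_eulerL ltnS kn IHn.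
Qed.

Lemma eulerPS n u : eulerP n.+1 u =
  u ^+ n.+1 - 2^-1 * \sum_(k < n.+1) 'C(n.+1, k)%:R * eulerP k u.
Proof.
rewrite /eulerP /= nth_rcons size_eulerL ltnn eqxx; congr (_ - _ * _).
by apply: eq_bigr => k _; rewrite nth_eulerL // -ltnS.
Qed.

Lemma eulerPD1 n u : eulerP n (u + 1) + eulerP n u = 2 * u ^+ n.
Proof.
elim/ltn_ind: n u => -[|n] IHn u; first by rewrite /eulerP /= expr0 mulr1.
have binom : \sum_(k < n.+1) 'C(n.+1, k)%:R * u ^+ k = (u + 1) ^+ n.+1 - u ^+ n.+1.
  rewrite exprD1n [in RHS]big_ord_recr /= binn mulr1n addrK.
  by apply: eq_bigr => k _; rewrite mulr_natl.
have shifted : \sum_(k < n.+1) 'C(n.+1, k)%:R * eulerP k (u + 1) =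
    2 * ((u + 1) ^+ n.+1 - u ^+ n.+1) - \sum_(k < n.+1) 'C(n.+1, k)%:R * eulerP k u.
  rewrite -binom mulr_sumr -sumrB; apply: eq_bigr => k _.
  by move: (IHn k (ltn_ord k) u) => /(canRL (addrK _)) ->; ring.
by rewrite !eulerPS shifted; field.
Qed.

Lemma polyfun_eulerP n : polyfun (@eulerP R n).
Proof.
elim/ltn_ind: n => -[|n] IHn; first exact: (polyfunC 1).
apply: (eq_polyfun (eulerPS n)); apply: polyfunD; first exact/polyfunXn/polyfunX.
apply/polyfunN/polyfunM; first exact: polyfunC.
by apply: polyfun_sum => k; apply: polyfunM; [exact: polyfunC | exact: IHn].
Qed.

Ltac solve_polyfun :=
  repeat first
    [ exact: polyfunC | exact: polyfunX | exact: polyfun_eulerP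
    | apply: polyfunD | apply: polyfunN | apply: polyfunM | apply: polyfunXn
    | apply: polyfun_sum => ? | apply: polyfun_alt_sum
    | apply: (polyfun_comp (polyfun_eulerP _)) ].

Lemma eulerP_mult m n u : odd m -> eulerP n u = m%:R ^+ n * alt_sum m (eulerP n) u.
Proof.
move=> m_odd; have m_neq0 : m%:R != 0 :> R by rewrite pnatr_eq0 -lt0n odd_gt0.
move: u; apply: eq_polyfun_antiperiodic; [solve_polyfun | solve_polyfun | move=> u].
rewrite -mulrDr alt_sumD1 // !eulerPD1 expr_div_n mulrCA [m%:R ^+ n * _]mulrCA.
by rewrite mulfV ?mulr1 // expf_neq0.
Qed.

Lemma eulerPD n v y :
  eulerP n (v + y) = \sum_(k < n.+1) 'C(n, k)%:R * y ^+ (n - k) * eulerP k v.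
Proof.
move: v; apply: eq_polyfun_antiperiodic; [solve_polyfun | solve_polyfun | move=> v].
rewrite addrAC eulerPD1 -big_split /= addrC exprDn mulr_sumr.
by apply: eq_bigr => k _; rewrite -mulrDr eulerPD1 -mulr_natl; ring.
Qed.

Lemma eulerP_conv n y v :
  \sum_(k < n.+1) 'C(n, k)%:R * eulerP (n - k) y * eulerP k v =
  2 * (1 - (y + v)) * eulerP n (y + v) + 2 * eulerP n.+1 (y + v).
Proof.
move: y; apply: eq_polyfun_antiperiodic; [solve_polyfun | solve_polyfun | move=> y].
transitivity (2 * eulerP n (v + y)).
  rewrite eulerPD mulr_sumr -big_split; apply: eq_bigr => k _ /=.
  by rewrite -mulrDl -mulrDr eulerPD1; ring.
rewrite (addrC v) (addrAC y 1 v); move: (eulerPD1 n (y + v)) (eulerPD1 n.+1 (y + v)).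
by rewrite exprS => /(canRL (addrK _)) -> /(canRL (addrK _)) ->; ring.
Qed.

End EulerPolynomials.

Section EulerFunctions.
Variable R : realType.
Implicit Types (f g : R -> R) (u w : R).

Lemma fracR_itv u : 0 <= fracR u < 1.
Proof.
move: (floor_itv u); rewrite /fracR intrD mulr1z => /andP [? ?].
by apply/andP; split; lra.
Qed.

Lemma fracR_id u : 0 <= u < 1 -> fracR u = u.
Proof. by move=> u01; rewrite /fracR (floor_def (m := 0)) ?subr0 // add0r. Qed.

Lemma floorD1 u : Num.floor (u + 1) = Num.floor u + 1.
Proof. by rewrite floorDrz ?rpred1 // floor1. Qed.

Lemma fracRD1 u : fracR (u + 1) = fracR u.
Proof. by rewrite /fracR floorD1 intrD mulr1z opprD addrACA subrr addr0. Qed.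

Lemma antiperiodic_addz f u (z : int) : antiperiodic f -> f (u + z%:~R) = (-1) ^ z * f u.
Proof.
move=> fA; rewrite expN1r; case: z => k; first exact: antiperiodic_addn.
set v := u + _; have -> : u = v + k.+1%:R by rewrite /v NegzE intrN subrK.
by rewrite antiperiodic_addn // mulrA -expr2 sqrr_sign mul1r.
Qed.

Lemma eq_antiperiodic f g : antiperiodic f -> antiperiodic g ->
  (forall u, 0 <= u < 1 -> f u = g u) -> forall u, f u = g u.
Proof.
move=> fA gA fg u; rewrite -[u](subrK (Num.floor u)%:~R).
by rewrite !antiperiodic_addz // fg ?fracR_itv.
Qed.

Lemma eq_antiperiodic2 (f g : R -> R -> R) :
  (forall z, antiperiodic (f^~ z)) -> (forall x, antiperiodic (f x)) ->
  (forall z, antiperiodic (g^~ z)) -> (forall x, antiperiodic (g x)) ->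
  (forall x z, 0 <= x < 1 -> 0 <= z < 1 -> f x z = g x z) ->
  forall x z, f x z = g x z.
Proof.
move=> fxA fzA gxA gzA fg x z; apply: (eq_antiperiodic (fzA x) (gzA x)) => {}z z01.
by apply: (eq_antiperiodic (fxA z) (gxA z)) => {}x x01; apply: fg.
Qed.

Lemma antiperiodic_eulerF n : antiperiodic (@eulerF R n).
Proof.
move=> u; rewrite /eulerF fracRD1 floorD1 expfzDr ?oppr_eq0 ?oner_neq0 //.
by rewrite expr1z mulrAC mulrN1.
Qed.

Lemma eulerF_itv n u : 0 <= u < 1 -> eulerF n u = eulerP n u.
Proof.
by move=> u01; rewrite /eulerF fracR_id // (floor_def (m := 0)) ?mul1r // add0r.
Qed.

Lemma bernF_periodic n u : bernF n (u + 1) = bernF n u.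
Proof. by rewrite /bernF fracRD1. Qed.

Lemma bernF1_itv u : 0 <= u < 1 -> bernF 1 u = u - 2^-1.
Proof.
by move=> u01; rewrite /bernF fracR_id // /bernP /= big_ord1 /= bin0 !mulr1 expr1.
Qed.

Lemma eulerF_mult m n u : odd m -> eulerF n u = m%:R ^+ n * alt_sum m (eulerF n) u.
Proof.
move=> m_odd; move: u; apply: eq_antiperiodic => [|u|u u01].
- exact: antiperiodic_eulerF.
- by rewrite antiperiodic_alt_sum ?mulrN //; exact: antiperiodic_eulerF.
rewrite eulerF_itv // (eulerP_mult _ _ m_odd); congr (_ * _).
by apply: eq_alt_sum_itv => // t t01; rewrite eulerF_itv.
Qed.

Lemma eulerFS_sub_eulerPS n w : 0 <= w < 2 ->
  eulerF n.+1 w - eulerP n.+1 w = (w - 1) * (eulerF n w - eulerP n w).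
Proof.
move=> /andP [w_ge0 w_lt2]; have [w_lt1 | w_ge1] := ltP w 1.
  by rewrite !eulerF_itv ?w_ge0 // !subrr mulr0.
set t := w - 1; have t01 : 0 <= t < 1 by apply/andP; split; rewrite /t; lra.
have -> : w = t + 1 by rewrite /t subrK.
rewrite !antiperiodic_eulerF !eulerF_itv //.
move: (eulerPD1 n t) (eulerPD1 n.+1 t); rewrite exprS.
by move=> /(canRL (addrK _)) -> /(canRL (addrK _)) ->; ring.
Qed.

End EulerFunctions.

Section S5Properties.
Variable R : realType.
Implicit Types (x z : R).

Lemma S5E p a c x z :
  S5 p a c x z = alt_sum c (fun y => eulerF p.-1 (a%:R * y + x) * bernF 1 y) z.
Proof. by rewrite /S5 /alt_sum; apply: eq_bigr => mu _; rewrite [RHS]mulrA. Qed.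

Lemma antiperiodic_S5_x p a c z : antiperiodic (fun x : R => S5 p a c x z).
Proof.
move=> x; rewrite /S5 -sumrN; apply: eq_bigr => mu _.
by rewrite addrA antiperiodic_eulerF mulrN mulNr.
Qed.

Lemma antiperiodic_S5_z p a c x : odd a -> odd c -> antiperiodic (S5 p a c x).
Proof.
move=> a_odd c_odd z; rewrite !S5E; apply: antiperiodic_alt_sum c_odd _ z => y.
rewrite bernF_periodic (mulrDr a%:R) mulr1 addrAC.
rewrite (antiperiodic_addn _ _ (antiperiodic_eulerF _)) -signr_odd a_odd.
by rewrite mulN1r mulNr.
Qed.

Lemma S5_itv n a c x z : odd a -> 0 <= z < 1 ->
  S5 n.+1 a c x z =
  a%:R ^+ n * alt_sum c (fun y => alt_sum a (fun v => (y - 2^-1) * eulerF n (y + v)) x) z.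
Proof.
move=> a_odd z01; rewrite S5E -alt_sumMl; apply: eq_alt_sum_itv => // y y01.
rewrite bernF1_itv // (eulerF_mult _ _ a_odd) alt_sum_shift ?odd_gt0 // alt_sumMl.
by rewrite mulrCA mulrC.
Qed.

End S5Properties.

Section Reciprocity.
Variable R : realType.
Variables a c : nat.
Hypotheses (a_odd : odd a) (c_odd : odd c) (co_ac : coprime a c).
Implicit Types (x z : R).

Definition S5_recip_lhs p x z :=
  a%:R * c%:R ^+ p * S5 p a c x z + c%:R * a%:R ^+ p * S5 p c a z x.

Definition S5_recip_rhs p x z :=
  - 2^-1 * \sum_(1 <= j < p.+1)
             'C(p.-1, j.-1)%:R * a%:R ^+ (p.+1 - j) * c%:R ^+ j
               * eulerF (p - j) z * eulerF j.-1 x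
  + eulerF p (a%:R * z + c%:R * x).

Definition alt_grid x z (F : R -> R -> R) := alt_sum c (fun y => alt_sum a (F y) x) z.

Lemma antiperiodic_recip_lhs_x p z : antiperiodic (S5_recip_lhs p ^~ z).
Proof.
move=> x; rewrite /S5_recip_lhs antiperiodic_S5_x antiperiodic_S5_z //.
by rewrite !mulrN opprD.
Qed.

Lemma antiperiodic_recip_lhs_z p x : antiperiodic (S5_recip_lhs p x).
Proof.
move=> z; rewrite /S5_recip_lhs antiperiodic_S5_x antiperiodic_S5_z //.
by rewrite !mulrN opprD.
Qed.

Lemma antiperiodic_recip_rhs_x p z : antiperiodic (S5_recip_rhs p ^~ z).
Proof.
move=> x; rewrite /S5_recip_rhs mulrDr mulr1 addrA.
rewrite (antiperiodic_addn _ _ (antiperiodic_eulerF _)) -signr_odd c_odd mulN1r.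
under eq_bigr do rewrite antiperiodic_eulerF mulrN.
by rewrite sumrN mulrN opprD.
Qed.

Lemma antiperiodic_recip_rhs_z p x : antiperiodic (S5_recip_rhs p x).
Proof.
move=> z; rewrite /S5_recip_rhs mulrDr mulr1 addrAC.
rewrite (antiperiodic_addn _ _ (antiperiodic_eulerF _)) -signr_odd a_odd mulN1r.
under eq_bigr do rewrite antiperiodic_eulerF mulrN mulNr.
by rewrite sumrN mulrN opprD.
Qed.

Lemma eq_alt_grid_itv x z (F G : R -> R -> R) : 0 <= x < 1 -> 0 <= z < 1 ->
  (forall y v, 0 <= y < 1 -> 0 <= v < 1 -> F y v = G y v) ->
  alt_grid x z F = alt_grid x z G.
Proof.
move=> x01 z01 FG; apply: eq_alt_sum_itv => // y y01.
by apply: eq_alt_sum_itv => // v v01; apply: FG.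
Qed.

Lemma alt_gridD x z (F G : R -> R -> R) :
  alt_grid x z (fun y v => F y v + G y v) = alt_grid x z F + alt_grid x z G.
Proof. by rewrite /alt_grid -alt_sumD; apply: eq_alt_sum => y; rewrite alt_sumD. Qed.

Lemma alt_gridMl x z k (F : R -> R -> R) :
  alt_grid x z (fun y v => k * F y v) = k * alt_grid x z F.
Proof. by rewrite /alt_grid -alt_sumMl; apply: eq_alt_sum => y; rewrite alt_sumMl. Qed.

Lemma eulerF_grid n x z :
  eulerF n (a%:R * z + c%:R * x) =
  (a%:R * c%:R) ^+ n * alt_grid x z (fun y v => eulerF n (y + v)).
Proof.
have c_neq0 : c%:R != 0 :> R by rewrite pnatr_eq0 -lt0n odd_gt0.
rewrite (eulerF_mult _ _ c_odd).
rewrite -(alt_sum_coprime _ a_odd c_odd co_ac (antiperiodic_eulerF _)).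
rewrite exprMn [a%:R ^+ n * _]mulrC -mulrA /alt_grid -alt_sumMl; congr (_ * _).
apply: eq_bigr => mu _; congr (_ * _).
have -> : (a%:R * mu%:R + (a%:R * z + c%:R * x)) / c%:R = a%:R * ((mu%:R + z) / c%:R) + x.
  by field.
by rewrite (eulerF_mult _ _ a_odd) alt_sum_shift ?odd_gt0.
Qed.

Lemma binomial_sum_grid n x z : 0 <= x < 1 -> 0 <= z < 1 ->
  \sum_(1 <= j < n.+2) 'C(n, j.-1)%:R * a%:R ^+ (n.+2 - j) * c%:R ^+ j
                         * eulerF (n.+1 - j) z * eulerF j.-1 x =
  (a%:R * c%:R) ^+ n.+1 * alt_grid x z
    (fun y v => \sum_(k < n.+1) 'C(n, k)%:R * eulerP (n - k) y * eulerP k v).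
Proof.
move=> x01 z01; rewrite big_add1 big_mkord /alt_grid.
under eq_alt_sum => y do rewrite alt_sum_sum.
rewrite alt_sum_sum mulr_sumr; apply: eq_bigr => k _ /=.
under eq_alt_sum => y do rewrite alt_sumMl mulrAC.
rewrite alt_sumMl subSS !eulerF_itv // (eulerP_mult _ _ c_odd) (eulerP_mult _ _ a_odd).
have ea : a%:R ^+ (n.+1 - k) * a%:R ^+ k = a%:R ^+ n.+1 :> R.
  by rewrite -exprD subnK // ltnW.
have ec : c%:R ^+ k.+1 * c%:R ^+ (n - k) = c%:R ^+ n.+1 :> R.
  by rewrite -exprD addSn subnKC // -ltnS.
by rewrite exprMn -ea -ec; ring.
Qed.

Lemma recip_lhs_grid n x z : 0 <= x < 1 -> 0 <= z < 1 ->
  S5_recip_lhs n.+1 x z =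
  (a%:R * c%:R) ^+ n.+1 * alt_grid x z (fun y v => (y + v - 1) * eulerF n (y + v)).
Proof.
move=> x01 z01.
transitivity ((a%:R * c%:R) ^+ n.+1 *
  (alt_grid x z (fun y v => (y - 2^-1) * eulerF n (y + v)) +
   alt_grid x z (fun y v => (v - 2^-1) * eulerF n (v + y)))).
  rewrite /S5_recip_lhs !S5_itv // (alt_sum_exchange a c) /alt_grid.
  by rewrite exprMn !exprS; ring.
rewrite -alt_gridD; congr (_ * _); apply: eq_alt_grid_itv => // y v _ _.
by rewrite (addrC v y); field.
Qed.

Lemma recip_rhs_grid n x z : 0 <= x < 1 -> 0 <= z < 1 ->
  S5_recip_rhs n.+1 x z =
  (a%:R * c%:R) ^+ n.+1 * alt_grid x z (fun y v =>
    - 2^-1 * \sum_(k < n.+1) 'C(n, k)%:R * eulerP (n - k) y * eulerP k v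
    + eulerF n.+1 (y + v)).
Proof.
move=> x01 z01; rewrite alt_gridD alt_gridMl mulrDr mulrCA -binomial_sum_grid //.
by rewrite -eulerF_grid.
Qed.

Lemma S5_recip_itv n x z : 0 <= x < 1 -> 0 <= z < 1 ->
  S5_recip_lhs n.+1 x z = S5_recip_rhs n.+1 x z.
Proof.
move=> x01 z01; rewrite recip_lhs_grid // recip_rhs_grid //; congr (_ * _).
apply: eq_alt_grid_itv => // y v /andP [y_ge0 y_lt1] /andP [v_ge0 v_lt1].
have w02 : 0 <= y + v < 2 by apply/andP; split; lra.
rewrite eulerP_conv; move: (eulerFS_sub_eulerPS n w02) => /(canRL (subrK _)) ->.
by field.
Qed.

Lemma S5_recip n x z : S5_recip_lhs n.+1 x z = S5_recip_rhs n.+1 x z.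
Proof.
move: x z; apply: eq_antiperiodic2 => [z|x|z|x|x z].
- exact: antiperiodic_recip_lhs_x.
- exact: antiperiodic_recip_lhs_z.
- exact: antiperiodic_recip_rhs_x.
- exact: antiperiodic_recip_rhs_z.
- exact: S5_recip_itv.
Qed.

End Reciprocity.

Theorem corollary3 (R : realType) (a c : nat) :
  (0 < a)%N -> (0 < c)%N -> odd a -> odd c -> coprime a c ->
  forall (p : nat), (1 <= p)%N -> forall x z : R,
    a%:R * c%:R ^+ p * S5 p a c x z + c%:R * a%:R ^+ p * S5 p c a z x =
    - 2^-1 * \sum_(1 <= j < p.+1)
                ('C(p.-1, j.-1))%:R * a%:R ^+ (p.+1 - j) * c%:R ^+ j
                  * eulerF (p - j) z * eulerF j.-1 x
    + eulerF p (a%:R * z + c%:R * x).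
Proof.
(* The positivity of a and c follows from their oddness. *)
move=> _ _ a_odd c_odd co_ac [//|n] _ x z.
exact: S5_recip a_odd c_odd co_ac n x z.
Qed.
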